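(* Let $\mathcal{O}=(O_1,\ldots,O_n)$ be a chain with $n\ge 2$, and let $\mathcal{O}_{1,n-1}=(O_1,\ldots,O_{n-1})$. Then $\Phi_{\mathcal{O}}\le\Phi_{\mathcal{O}_{1,n-1}}$, where for a chain $\mathcal{Q}=(O_1,\ldots,O_m)$, $\Phi_{\mathcal{Q}}=\varphi(r_m-r_1)-\frac{\varphi}{3}\sum_{i=2}^m(2H_i+V_i)$ with $\varphi=\frac{3}{\sqrt5}(1-1.8/1.998)$.
   Context: All objects lie in the Euclidean plane; a ''circle'' means a closed disk. Chain. A sequence of distinct finite closed disks $(O_1,\ldots,O_n)$ is a chain if: (1) every two consecutive disks $O_i,O_{i+1}$ intersect; let $a_i,b_i$ be the common points of their boundary circles ($a_i=b_i$ if tangent), labelled so that all the $a_i$ lie on one side of the chain and all the $b_i$ on the other. Let $C_i^{(i+1)}$ be the arc of the boundary of $O_i$ lying in $O_{i+1}$ and $C_{i+1}^{(i)}$ the arc of the boundary of $O_{i+1}$ lying in $O_i$. (2) For $2\le i\le n-1$, the arcs $C_i^{(i-1)}$ and $C_i^{(i+1)}$ share no point other than a boundary point. $r_i$ is the radius and $o_i$ the center of $O_i$. For $2\le i\le n$, choose coordinates in which $o_{i-1},o_i$ lie on a horizontal line and $a_{i-1}$ is on or above that line. Let $q_{i-1}^{\rightarrow}$ (resp. $q_i^{\leftarrow}$) be the point of the upper boundary of $O_{i-1}$ (resp. $O_i$) farthest from the line $o_{i-1}o_i$. Let $Q_{i-1}^{\rightarrow}$ be the upper arc of the boundary of $O_{i-1}$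 between $q_{i-1}^{\rightarrow}$ and $a_{i-1}$, and $Q_i^{\leftarrow}$ the upper arc of the boundary of $O_i$ between $q_i^{\leftarrow}$ and $a_{i-1}$. $Q_{i-1}^{\rightarrow}$ is colored red if it lies inside $O_i$ and green otherwise; $Q_i^{\leftarrow}$ is red if it lies inside $O_{i-1}$ and green otherwise. Let $\mathcal{P}_i$ be the path from $q_{i-1}^{\rightarrow}$ to $q_i^{\leftarrow}$ formed by $Q_{i-1}^{\rightarrow}$ and $Q_i^{\leftarrow}$. $H_i$ (resp. $V_i$) is the horizontal (resp. vertical) distance traveled along $\mathcal{P}_i$, green arcs contributing positively and red arcs negatively. *)

From Stdlib Require Import Reals Lra List ClassicalEpsilon.
Open Scope R_scope.

Definition pt := (R * R)%type.
Definition psub (p q : pt) : pt := (fst p - fst q, snd p - snd q).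
Definition dot (p q : pt) : R := fst p * fst q + snd p * snd q.
(* cross (v, w) > 0 iff w is to the left of the direction v *)
Definition cross (v w : pt) : R := fst v * snd w - snd v * fst w.
Definition pscale (k : R) (p : pt) : pt := (k * fst p, k * snd p).
Definition dist2 (p q : pt) : R := dot (psub p q) (psub p q).

Definition in_disk (c : pt) (r : R) (p : pt) : Prop := dist2 p c <= r ^ 2.
Definition on_circle (c : pt) (r : R) (p : pt) : Prop := dist2 p c = r ^ 2.

(* A chain (O_1, ..., O_n): O_i has center o i and radius r i (indices 1..n);
   a i, b i (1 <= i < n) are the common points of the boundary circles of
   O_i and O_{i+1}. *)
Definition is_chain (n : nat) (o : nat -> pt) (r : nat -> R)
    (a b : nat -> pt) : Prop :=
  (forall i, (1 <= i <= n)%nat -> 0 < r i) /\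
  (forall i j, (1 <= i <= n)%nat -> (1 <= j <= n)%nat -> i <> j ->
      (o i, r i) <> (o j, r j)) /\
  (forall i, (1 <= i < n)%nat ->
      (exists p, in_disk (o i) (r i) p /\ in_disk (o (S i)) (r (S i)) p) /\
      (forall p, (on_circle (o i) (r i) p /\ on_circle (o (S i)) (r (S i)) p)
                 <-> (p = a i \/ p = b i))) /\
  (* all a_i lie on one side of the chain (all b_i on the other) *)
  ((forall i, (1 <= i < n)%nat ->
      0 <= cross (psub (o (S i)) (o i)) (psub (a i) (o i))) \/
   (forall i, (1 <= i < n)%nat ->
      cross (psub (o (S i)) (o i)) (psub (a i) (o i)) <= 0)) /\
  (* (2) for 2 <= i <= n-1, C_i^(i-1) and C_i^(i+1) share only
     boundary (end) points *)
  (forall i, (2 <= i)%nat -> (i <= n - 1)%nat -> forall p,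
      on_circle (o i) (r i) p ->
      in_disk (o (pred i)) (r (pred i)) p ->
      in_disk (o (S i)) (r (S i)) p ->
      on_circle (o (pred i)) (r (pred i)) p \/ on_circle (o (S i)) (r (S i)) p).

(* Coordinates for step i (2 <= i): "horizontal" unit vector along
   o_{i-1} -> o_i, and "vertical" unit normal pointing to the side of a_{i-1}. *)
Definition hdir (o : nat -> pt) (i : nat) : pt :=
  pscale (/ sqrt (dist2 (o i) (o (pred i)))) (psub (o i) (o (pred i))).
Definition vdir (o : nat -> pt) (a : nat -> pt) (i : nat) : pt :=
  let u := hdir o i in
  let w := (- snd u, fst u) in
  if Rle_dec 0 (dot (psub (a (pred i)) (o (pred i))) w) then w
  else pscale (-1) w.

(* Upper arc of the circle (c, rad) between its topmost point (horizontal
   coordinate 0 relative to c) and the point x. *)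
Definition upper_arc (u v c : pt) (rad : R) (x : pt) (p : pt) : Prop :=
  on_circle c rad p /\ 0 <= dot (psub p c) v /\
  Rmin 0 (dot (psub x c) u) <= dot (psub p c) u <= Rmax 0 (dot (psub x c) u).

(* sign of an arc: -1 (red) if it lies inside the disk (c', r'), +1 (green) otherwise *)
Definition arc_sign (S : pt -> Prop) (c' : pt) (r' : R) : R :=
  if excluded_middle_informative (forall p, S p -> in_disk c' r' p)
  then -1 else 1.

Definition Qright (o : nat -> pt) (r : nat -> R) (a : nat -> pt) (i : nat) :=
  upper_arc (hdir o i) (vdir o a i) (o (pred i)) (r (pred i)) (a (pred i)).
Definition Qleft (o : nat -> pt) (r : nat -> R) (a : nat -> pt) (i : nat) :=
  upper_arc (hdir o i) (vdir o a i) (o i) (r i) (a (pred i)).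

Definition sR o r a i := arc_sign (Qright o r a i) (o i) (r i).
Definition sL o r a i := arc_sign (Qleft o r a i) (o (pred i)) (r (pred i)).

(* H_i and V_i: signed horizontal / vertical distances travelled along P_i *)
Definition Hh (o : nat -> pt) (r : nat -> R) (a : nat -> pt) (i : nat) : R :=
  sR o r a i * Rabs (dot (psub (a (pred i)) (o (pred i))) (hdir o i)) +
  sL o r a i * Rabs (dot (psub (a (pred i)) (o i)) (hdir o i)).
Definition Vv (o : nat -> pt) (r : nat -> R) (a : nat -> pt) (i : nat) : R :=
  sR o r a i * (r (pred i) - dot (psub (a (pred i)) (o (pred i))) (vdir o a i)) +
  sL o r a i * (r i - dot (psub (a (pred i)) (o i)) (vdir o a i)).

Definition varphi : R := 3 / sqrt 5 * (1 - (18/10) / (1998/1000)).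

Definition sum_2_to (f : nat -> R) (m : nat) : R :=
  fold_right Rplus 0 (map f (seq 2 (m - 1))).

Definition Phi (o : nat -> pt) (r : nat -> R) (a : nat -> pt) (m : nat) : R :=
  varphi * (r m - r 1%nat) -
  varphi / 3 * sum_2_to (fun i => 2 * Hh o r a i + Vv o r a i) m.

From Stdlib Require Import Reals Lra Psatz List Lia ClassicalEpsilon.
Open Scope R_scope.

(* Only the last step of the chain changes, so the claim is
   3 (r_n - r_{n-1}) <= 2 H_n + V_n.  In coordinates with o_{n-1} = (0,0),
   o_n = (d,0) and a_{n-1} = (x,y), y >= 0, this is an inequality between
   x, y, d and the radii.  A red arc contains the topmost point of its circle,
   which then lies in the other disk; this gives r_{n-1}^2 + d^2 <= r_n^2
   (resp. d^2 + r_n^2 <= r_{n-1}^2), and in each of the four colourings the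
   inequality follows from these, the two circle equations and the triangle
   inequality. *)

Lemma two_arc_bound (x y d R1 R2 sR sL : R) :
  0 < d -> 0 < R1 -> 0 < R2 -> 0 <= y ->
  x ^ 2 + y ^ 2 = R1 ^ 2 -> (x - d) ^ 2 + y ^ 2 = R2 ^ 2 ->
  (sR = -1 \/ sR = 1) -> (sL = -1 \/ sL = 1) ->
  (sR = -1 -> R1 ^ 2 + d ^ 2 <= R2 ^ 2) ->
  (sL = -1 -> d ^ 2 + R2 ^ 2 <= R1 ^ 2) ->
  3 * (R2 - R1) <=
    2 * (sR * Rabs x + sL * Rabs (x - d)) + (sR * (R1 - y) + sL * (R2 - y)).
Proof.
  intros Hd HR1 HR2 Hy E1 E2 [-> | ->] [-> | ->] redR redL.
  - specialize (redR eq_refl); specialize (redL eq_refl); nra.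
  - specialize (redR eq_refl).
    assert (Hx : x <= 0) by nra.
    assert (-x <= R1) by nra.
    assert (R2 <= R1 + d) by nra.
    rewrite (Rabs_left1 x Hx), (Rabs_left1 (x - d)) by lra; lra.
  - specialize (redL eq_refl).
    assert (Hx : d <= x) by nra.
    assert (R2 <= R1) by nra.
    rewrite (Rabs_right x), (Rabs_right (x - d)) by lra; lra.
  - assert (y <= R1) by nra.
    pose proof (Rabs_pos x); pose proof (Rabs_pos (x - d)).
    assert (Rabs (x - d) ^ 2 = (x - d) ^ 2) by apply pow2_abs.
    assert (R2 <= Rabs (x - d) + y) by nra.
    lra.
Qed.

Definition padd (p q : pt) : pt := (fst p + fst q, snd p + snd q).
Definition perp (u : pt) : pt := (- snd u, fst u).

Lemma dot_psub_shift (p c1 c2 w : pt) :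
  dot (psub p c2) w = dot (psub p c1) w - dot (psub c2 c1) w.
Proof. unfold dot, psub; simpl; ring. Qed.

Lemma dot_padd_scale (c v w : pt) (k : R) :
  dot (psub (padd c (pscale k v)) c) w = k * dot v w.
Proof. unfold dot, psub, padd, pscale; simpl; ring. Qed.

Lemma dot_pscale (k : R) (p q : pt) :
  dot (pscale k p) (pscale k q) = k * k * dot p q.
Proof. unfold dot, pscale; simpl; ring. Qed.

Lemma dot_comm (p q : pt) : dot p q = dot q p.
Proof. unfold dot; ring. Qed.

Lemma dot_pscale_r (k : R) (p q : pt) : dot p (pscale k q) = k * dot p q.
Proof. unfold dot, pscale; simpl; ring. Qed.

Definition is_normal (u v : pt) : Prop := v = perp u \/ v = pscale (-1) (perp u).

Lemma is_normal_orth (u v : pt) : is_normal u v -> dot u v = 0.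
Proof. intros [-> | ->]; unfold dot, perp, pscale; simpl; ring. Qed.

Lemma is_normal_unit (u v : pt) : dot u u = 1 -> is_normal u v -> dot v v = 1.
Proof. intros Hu [-> | ->]; rewrite <- Hu; unfold dot, perp, pscale; simpl; ring. Qed.

Lemma dot_frame (u v w : pt) :
  dot u u = 1 -> is_normal u v -> dot w w = (dot w u) ^ 2 + (dot w v) ^ 2.
Proof.
  intros Hu Hv.
  assert (E : dot w w * dot u u = (dot w u) ^ 2 + (dot w v) ^ 2)
    by (destruct Hv as [-> | ->]; unfold dot, perp, pscale; simpl; ring).
  rewrite Hu, Rmult_1_r in E; exact E.
Qed.

Lemma top_on_upper_arc (u v c x : pt) (rad : R) :
  dot u u = 1 -> is_normal u v -> 0 <= rad ->
  upper_arc u v c rad x (padd c (pscale rad v)).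
Proof.
  intros Hu Hv Hrad.
  pose proof (is_normal_orth u v Hv) as Huv; rewrite dot_comm in Huv.
  pose proof (is_normal_unit u v Hu Hv) as Hvv.
  unfold upper_arc, on_circle, dist2.
  rewrite (dot_frame u v _ Hu Hv), !dot_padd_scale, Huv, Hvv.
  pose proof (Rmin_l 0 (dot (psub x c) u)); pose proof (Rmax_l 0 (dot (psub x c) u)).
  repeat split; lra.
Qed.

Lemma arc_sign_cases (S : pt -> Prop) (c : pt) (rad : R) :
  arc_sign S c rad = -1 \/ arc_sign S c rad = 1.
Proof. unfold arc_sign; destruct excluded_middle_informative; auto. Qed.

Lemma arc_sign_red (S : pt -> Prop) (c : pt) (rad : R) :
  arc_sign S c rad = -1 -> forall p, S p -> in_disk c rad p.
Proof.
  unfold arc_sign; destruct excluded_middle_informative as [H | _]; [auto | lra].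
Qed.

Lemma dist2_pos (p q : pt) : p <> q -> 0 < dist2 p q.
Proof.
  destruct p as [p1 p2]; destruct q as [q1 q2]; intro Hne.
  unfold dist2, dot, psub; simpl.
  pose proof (Rle_0_sqr (p1 - q1)); pose proof (Rle_0_sqr (p2 - q2)).
  destruct (Req_dec p1 q1) as [-> | H1].
  - destruct (Req_dec p2 q2) as [-> | H2]; [now exfalso; apply Hne |].
    pose proof (Rsqr_pos_lt (p2 - q2) ltac:(lra)); unfold Rsqr in *; lra.
  - pose proof (Rsqr_pos_lt (p1 - q1) ltac:(lra)); unfold Rsqr in *; lra.
Qed.

Section Frame.

Variables (o a : nat -> pt) (i : nat).
Hypothesis centers_distinct : o (pred i) <> o i.

Let d := sqrt (dist2 (o i) (o (pred i))).

Lemma frame_dist_pos : 0 < d.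
Proof. apply sqrt_lt_R0, dist2_pos; congruence. Qed.

Lemma frame_dist_sq : d * d = dist2 (o i) (o (pred i)).
Proof. apply sqrt_sqrt, Rlt_le, dist2_pos; congruence. Qed.

Lemma dot_center_hdir (w : pt) :
  dot (psub (o i) (o (pred i))) w = d * dot (hdir o i) w.
Proof.
  pose proof frame_dist_pos as Hd.
  unfold hdir; fold d.
  unfold dot, pscale, psub; simpl; field; lra.
Qed.

Lemma hdir_unit : dot (hdir o i) (hdir o i) = 1.
Proof.
  pose proof frame_dist_pos as Hd.
  unfold hdir; fold d.
  rewrite dot_pscale; fold (dist2 (o i) (o (pred i))).
  rewrite <- frame_dist_sq; field; lra.
Qed.

Lemma vdir_is_normal : is_normal (hdir o i) (vdir o a i).
Proof. unfold vdir, is_normal, perp; cbv zeta; destruct Rle_dec; auto. Qed.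

Lemma vdir_side : 0 <= dot (psub (a (pred i)) (o (pred i))) (vdir o a i).
Proof.
  unfold vdir; cbv zeta; destruct Rle_dec as [H | H]; [exact H |].
  rewrite dot_pscale_r; lra.
Qed.

Variable r : nat -> R.
Hypotheses (r_prev_pos : 0 < r (pred i)) (r_pos : 0 < r i).
Hypotheses (a_on_prev : on_circle (o (pred i)) (r (pred i)) (a (pred i)))
           (a_on_cur : on_circle (o i) (r i) (a (pred i))).

Lemma radius_step_le_HV : 3 * (r i - r (pred i)) <= 2 * Hh o r a i + Vv o r a i.
Proof.
  pose proof frame_dist_pos as Hd.
  pose proof hdir_unit as Hu.
  pose proof vdir_is_normal as Hv.
  pose proof (is_normal_orth _ _ Hv) as Huv.
  pose proof (is_normal_unit _ _ Hu Hv) as Hvv.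
  set (u := hdir o i) in *; set (v := vdir o a i) in *.
  set (c1 := o (pred i)) in *; set (c2 := o i) in *; set (q := a (pred i)) in *.
  assert (shift : forall p w, dot (psub p c2) w = dot (psub p c1) w - d * dot u w)
    by (intros; rewrite (dot_psub_shift p c1 c2), dot_center_hdir; reflexivity).
  assert (coords : forall p c, dist2 p c = (dot (psub p c) u) ^ 2 + (dot (psub p c) v) ^ 2)
    by (intros; apply dot_frame; assumption).
  set (x := dot (psub q c1) u); set (y := dot (psub q c1) v).
  assert (Hx2 : dot (psub q c2) u = x - d) by (rewrite shift, Hu; unfold x; ring).
  assert (Hy2 : dot (psub q c2) v = y) by (rewrite shift, Huv; unfold y; ring).
  unfold Hh, Vv, sR, sL, Qright, Qleft; fold c1 c2 q u v; rewrite Hx2, Hy2.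
  unfold on_circle in a_on_prev, a_on_cur.
  rewrite coords in a_on_prev, a_on_cur; fold x y in a_on_prev; rewrite Hx2, Hy2 in a_on_cur.
  apply two_arc_bound; try assumption; try apply arc_sign_cases.
  - exact vdir_side.
  - intro red.
    pose proof (arc_sign_red _ _ _ red _
      (top_on_upper_arc u v c1 q (r (pred i)) Hu Hv (Rlt_le _ _ r_prev_pos))) as Hin.
    unfold in_disk in Hin; rewrite coords, !shift, !dot_padd_scale in Hin.
    rewrite (dot_comm v u), Hu, Huv, Hvv in Hin; lra.
  - intro red.
    pose proof (arc_sign_red _ _ _ red _
      (top_on_upper_arc u v c2 q (r i) Hu Hv (Rlt_le _ _ r_pos))) as Hin.
    assert (unshift : forall p w, dot (psub p c1) w = dot (psub p c2) w + d * dot u w)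
      by (intros; rewrite shift; ring).
    unfold in_disk in Hin; rewrite coords, !unshift, !dot_padd_scale in Hin.
    rewrite (dot_comm v u), Hu, Huv, Hvv in Hin; lra.
Qed.

End Frame.

Lemma same_center_same_radius (c p : pt) (r1 r2 : R) :
  0 < r1 -> 0 < r2 -> on_circle c r1 p -> on_circle c r2 p -> r1 = r2.
Proof. unfold on_circle; intros H1 H2 E1 E2; rewrite E1 in E2; nra. Qed.

Lemma fold_right_Rplus_acc (l : list R) (z : R) :
  fold_right Rplus z l = fold_right Rplus 0 l + z.
Proof. induction l as [| x l IH]; simpl; [| rewrite IH]; ring. Qed.

Lemma sum_2_to_S (f : nat -> R) (m : nat) : (1 <= m)%nat ->
  sum_2_to f (S m) = sum_2_to f m + f (S m).
Proof.
  intro Hm; unfold sum_2_to.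
  replace (S m - 1)%nat with (S (m - 1)) by lia.
  rewrite seq_S, map_app, fold_right_app; simpl.
  rewrite fold_right_Rplus_acc; replace (S (S (m - 1))) with (S m) by lia; ring.
Qed.

Lemma varphi_pos : 0 < varphi.
Proof.
  unfold varphi; apply Rmult_lt_0_compat.
  - apply Rdiv_lt_0_compat; [lra | apply sqrt_lt_R0; lra].
  - lra.
Qed.

Theorem proposition1 (n : nat) (o : nat -> pt) (r : nat -> R) (a b : nat -> pt) :
  (2 <= n)%nat -> is_chain n o r a b ->
  Phi o r a n <= Phi o r a (n - 1).
Proof.
  intros Hn [Hpos [Hdistinct [Hmeet _]]].
  destruct n as [| m]; [lia |].
  replace (S m - 1)%nat with m by lia.
  assert (Hprev : 0 < r m) by (apply Hpos; lia).
  assert (Hlast : 0 < r (S m)) by (apply Hpos; lia).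
  destruct (proj2 (proj2 (Hmeet m ltac:(lia)) (a m)) (or_introl eq_refl)) as [Con1 Con2].
  assert (Hne : o m <> o (S m)).
  { intro E; apply (Hdistinct m (S m)); try lia.
    rewrite E in Con1 |- *.
    now rewrite (same_center_same_radius _ _ _ _ Hprev Hlast Con1 Con2). }
  pose proof (radius_step_le_HV o a (S m) Hne r Hprev Hlast Con1 Con2) as Hstep; simpl in Hstep.
  pose proof varphi_pos.
  unfold Phi; rewrite sum_2_to_S by lia.
  nra.
Qed.
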